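(* In the Data Revocation Game: (1) The profile $d_i^*=0$ for all $i\in\mathcal I$ is a Nash equilibrium if and only if $$\epsilon_i\ge\Big(\xi_i\ell_i+\theta_i\sum_{j\in\mathcal I,\,j\ne i}\ell_j^2\Big)^{-1}\quad\text{for all } i\in\mathcal I.$$ (2) The profile $d_i^*=d_i^{\max}$ for all $i\in\mathcal I$ is a Nash equilibrium if and only if $$\epsilon_i\le(\xi_i\ell_i)^{-1}-\sum_{j\in\mathcal I}d_j^{\max}\quad\text{for all } i\in\mathcal I.$$
   Context: Data Revocation Game: a finite set of users $\mathcal I=\{1,\dots,I\}$, $I\ge 2$. Each user $i$ has parameters $d_i^{\max}>0$, $\epsilon_i>0$, $\xi_i>0$, $\ell_i>0$, $\theta_i\ge 0$. Each user chooses $d_i\in[0,d_i^{\max}]$. Payoff $$U_i(d_i,\boldsymbol{d_{-i}})=\ln\Big(\sum_{j\in\mathcal I}d_j+\epsilon_i\Big)-\xi_i d_i\ell_i-\theta_i d_i\sum_{j\neq i}\Big(1-\frac{d_j}{d_j^{\max}}\Big)\ell_j^2 .$$ A Nash equilibrium is a profile $(d_i^* )$ with $d_i^*\in[0,d_i^{\max}]$ and $U_i(d_i^*,\boldsymbol{d_{-i}^*})\ge U_i(d_i,\boldsymbol{d_{-i}^*})$ for all $i$ and all $d_i\in[0,d_i^{\max}]$. *)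

From HB Require Import structures.
From mathcomp Require Import all_boot all_order all_algebra.
From mathcomp Require Import all_classical all_reals all_analysis.
Set Implicit Arguments. Unset Strict Implicit. Unset Printing Implicit Defensive.
Import Order.TTheory GRing.Theory Num.Theory.
Local Open Scope ring_scope.

Section DRG.
Variables (R : realType) (I : finType).

Definition payoff (dmax eps xi ell theta : I -> R) (d : I -> R) (i : I) : R :=
  ln (\sum_(j : I) d j + eps i) - xi i * d i * ell i
  - theta i * d i * \sum_(j : I | j != i) (1 - d j / dmax j) * ell j ^+ 2.

Definition upd (d : I -> R) (i : I) (x : R) : I -> R :=
  fun j => if j == i then x else d j.

Definition feasible (dmax : I -> R) (d : I -> R) : Prop :=
  forall i, 0 <= d i <= dmax i.

Definition is_NE (dmax eps xi ell theta : I -> R) (d : I -> R) : Prop :=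
  feasible dmax d /\
  forall i (x : R), 0 <= x <= dmax i ->
    payoff dmax eps xi ell theta (upd d i x) i <= payoff dmax eps xi ell theta d i.
End DRG.

(* Fixing the other users' data, user i's payoff is
   [ln (x + s) - c x] up to a constant, where s > 0 collects the others'
   data plus eps_i and c > 0 is i's marginal cost.  Since [t |-> ln t - c t]
   increases on (0, 1/c] and decreases on [1/c, +oo), x = 0 is a best
   response on [0, dmax_i] iff s >= 1/c, and x = dmax_i is one iff
   dmax_i + s <= 1/c.  At the all-zero profile s = eps_i and
   c = xi_i l_i + theta_i sum_{j <> i} l_j^2; at the all-dmax profile the
   theta-term vanishes, so c = xi_i l_i and s = sum_{j <> i} dmax_j + eps_i. *)
From HB Require Import structures.
From mathcomp Require Import all_boot all_order all_algebra.
From mathcomp Require Import all_classical all_reals all_analysis.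
From mathcomp Require Import ring lra.
Import Order.TTheory GRing.Theory Num.Theory.
Local Open Scope ring_scope.

Section LnMinusLinear.
Variable R : realType.

Lemma ln_sub_le {p q : R} : 0 < p -> 0 < q -> ln p - ln q <= (p - q) / q.
Proof.
move=> p_gt0 q_gt0; rewrite -ln_div ?posrE //.
have pq_gt0 : 0 < p / q by rewrite divr_gt0.
have -> : p / q = 1 + (p - q) / q by rewrite mulrBl divff ?gt_eqF //; lra.
by apply: le_ln1Dx; move: pq_gt0; rewrite mulrBl divff ?gt_eqF //; lra.
Qed.

Lemma small_pos_witness {M a b : R} : 0 < M -> a < b ->
  exists2 x : R, 0 < x <= M & x + a < b.
Proof.
move=> M_gt0 lt_ab; exists (Num.min M ((b - a) / 2)).
  by rewrite lt_min M_gt0 ge_min lexx /=; lra.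
have : Num.min M ((b - a) / 2) <= (b - a) / 2 by rewrite ge_min lexx orbT.
lra.
Qed.

Variable c : R.
Hypothesis c_gt0 : 0 < c.

Lemma ln_sub_linear_le_before (p q : R) : 0 < p -> p <= q -> q <= c^-1 ->
  ln p - c * p <= ln q - c * q.
Proof.
move=> p_gt0 le_pq le_qc; have q_gt0 : 0 < q by lra.
have cq_le1 : c <= q^-1 by rewrite -(invrK c) lef_pV2 ?posrE ?invr_gt0.
have := ln_sub_le p_gt0 q_gt0.
have : (q - p) * c <= (q - p) / q by rewrite ler_wpM2l //; lra.
lra.
Qed.

Lemma ln_sub_linear_lt_before (p q : R) : 0 < p -> p < q -> q < c^-1 ->
  ln p - c * p < ln q - c * q.
Proof.
move=> p_gt0 lt_pq lt_qc; have q_gt0 : 0 < q by lra.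
have cq_lt1 : c < q^-1 by rewrite -(invrK c) ltf_pV2 ?posrE ?invr_gt0.
have := ln_sub_le p_gt0 q_gt0.
have : (q - p) * c < (q - p) / q by rewrite ltr_pM2l //; lra.
lra.
Qed.

Lemma ln_sub_linear_le_after (p q : R) : c^-1 <= q -> q <= p ->
  ln p - c * p <= ln q - c * q.
Proof.
move=> le_cq le_qp; have cV_gt0 : 0 < c^-1 by rewrite invr_gt0.
have q_gt0 : 0 < q by lra.
have p_gt0 : 0 < p by lra.
have qc_le1 : q^-1 <= c by rewrite -(invrK c) lef_pV2 ?posrE ?invr_gt0.
have := ln_sub_le p_gt0 q_gt0.
have : (p - q) / q <= (p - q) * c by rewrite ler_wpM2l //; lra.
lra.
Qed.

Lemma ln_sub_linear_lt_after (p q : R) : c^-1 < q -> q < p ->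
  ln p - c * p < ln q - c * q.
Proof.
move=> lt_cq lt_qp; have cV_gt0 : 0 < c^-1 by rewrite invr_gt0.
have q_gt0 : 0 < q by lra.
have p_gt0 : 0 < p by lra.
have qc_lt1 : q^-1 < c by rewrite -(invrK c) ltf_pV2 ?posrE ?invr_gt0.
have := ln_sub_le p_gt0 q_gt0.
have : (p - q) / q < (p - q) * c by rewrite ltr_pM2l //; lra.
lra.
Qed.

Variables (s M : R).
Hypotheses (s_gt0 : 0 < s) (M_gt0 : 0 < M).

Lemma ln_sub_linear_shift (x : R) :
  ln (x + s) - c * x = (ln (x + s) - c * (x + s)) + c * s.
Proof. lra. Qed.

Lemma best_response_lbound_iff :
  (forall x : R, 0 <= x <= M -> ln (x + s) - c * x <= ln (0 + s) - c * 0)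
  <-> c^-1 <= s.
Proof.
split=> [max0 | le_cs x /andP[x_ge0 x_leM]]; last first.
  rewrite !ln_sub_linear_shift lerD2r.
  by apply: ln_sub_linear_le_after => //; lra.
rewrite leNgt; apply/negP => lt_sc.
have [x /andP[x_gt0 x_leM] lt_xc] := small_pos_witness M_gt0 lt_sc.
have := max0 x; clear max0; rewrite ltW //= x_leM => /(_ isT).
rewrite !ln_sub_linear_shift lerD2r add0r; apply/negP; rewrite -ltNge.
by apply: ln_sub_linear_lt_before s_gt0 _ lt_xc; rewrite ltrDr.
Qed.

(* Leaving [M - t] with [M + s - t > 1/c] strictly improves on [M]. *)
Lemma best_response_ubound_iff :
  (forall x : R, 0 <= x <= M -> ln (x + s) - c * x <= ln (M + s) - c * M)
  <-> M + s <= c^-1.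
Proof.
split=> [maxM | le_Mc x /andP[x_ge0 x_leM]]; last first.
  have xs_gt0 : 0 < x + s := ltr_wpDl x_ge0 s_gt0.
  rewrite !ln_sub_linear_shift lerD2r.
  by apply: ln_sub_linear_le_before xs_gt0 _ le_Mc; rewrite lerD2r.
rewrite leNgt; apply/negP => lt_cM.
have [t /andP[t_gt0 t_leM] lt_t] : exists2 t : R, 0 < t <= M & t + (c^-1 - M) < s.
  by apply: small_pos_witness => //; lra.
have := maxM (M - t); clear maxM; rewrite subr_ge0 t_leM gerBl ltW // => /(_ isT).
rewrite !ln_sub_linear_shift lerD2r; apply/negP; rewrite -ltNge.
have lt_cMt : c^-1 < M - t + s by lra.
by apply: ln_sub_linear_lt_after lt_cMt _; rewrite ltrD2r gtrBl.
Qed.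

End LnMinusLinear.

Arguments best_response_lbound_iff {R c} c_gt0 {s M}.
Arguments best_response_ubound_iff {R c} c_gt0 {s M}.

Section RevocationGame.
Variables (R : realType) (I : finType) (dmax eps xi ell theta : I -> R).
Hypotheses (dmax_gt0 : forall i, 0 < dmax i) (eps_gt0 : forall i, 0 < eps i).
Hypotheses (xi_gt0 : forall i, 0 < xi i) (ell_gt0 : forall i, 0 < ell i).
Hypothesis theta_ge0 : forall i, 0 <= theta i.

Definition rivals_load (d : I -> R) (i : I) : R := \sum_(j | j != i) d j + eps i.

Definition unit_cost (d : I -> R) (i : I) : R :=
  xi i * ell i + theta i * \sum_(j | j != i) (1 - d j / dmax j) * ell j ^+ 2.

Lemma payoff_upd (d : I -> R) i x :
  payoff dmax eps xi ell theta (upd d i x) i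
  = ln (x + rivals_load d i) - unit_cost d i * x.
Proof.
have upd_rivals (F : I -> R -> R) :
    \sum_(j | j != i) F j (upd d i x j) = \sum_(j | j != i) F j (d j).
  by apply: eq_bigr => j /negbTE ji; rewrite /upd ji.
rewrite /payoff (bigD1 i) //= (upd_rivals (fun _ y => y)).
rewrite (upd_rivals (fun j y => (1 - y / dmax j) * ell j ^+ 2)).
rewrite /upd eqxx /rivals_load /unit_cost addrA; ring.
Qed.

Lemma upd_id (d : I -> R) i : upd d i (d i) = d.
Proof. by apply: funext => j; rewrite /upd; case: eqP => [->|]. Qed.

Lemma is_NE_iff (d : I -> R) : feasible dmax d ->
  is_NE dmax eps xi ell theta d <->
  forall i (x : R), 0 <= x <= dmax i ->
    ln (x + rivals_load d i) - unit_cost d i * x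
    <= ln (d i + rivals_load d i) - unit_cost d i * d i.
Proof.
move=> feas_d; rewrite /is_NE; split=> [[_ br] i x|br]; last split=> // i x.
  by rewrite -!payoff_upd upd_id; apply: br.
by rewrite -{2}(upd_id d i) !payoff_upd; apply: br.
Qed.

Lemma rivals_load_gt0 (d : I -> R) i : feasible dmax d -> 0 < rivals_load d i.
Proof.
move=> feas_d; rewrite /rivals_load ltr_wpDl //.
by apply: sumr_ge0 => j _; case/andP: (feas_d j).
Qed.

Lemma unit_cost_gt0 (d : I -> R) i : feasible dmax d -> 0 < unit_cost d i.
Proof.
move=> feas_d; apply: ltr_pwDl; first exact: mulr_gt0.
apply: mulr_ge0 => //; apply: sumr_ge0 => j _; rewrite mulr_ge0 ?sqr_ge0 // subr_ge0.
by rewrite ler_pdivrMr // mul1r; case/andP: (feas_d j).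
Qed.

Lemma feasible0 : feasible dmax (fun _ => 0).
Proof. by move=> i; rewrite lexx ltW. Qed.

Lemma feasible_max : feasible dmax dmax.
Proof. by move=> i; rewrite lexx ltW. Qed.

Lemma is_NE0_iff : is_NE dmax eps xi ell theta (fun _ => 0) <->
  forall i, (unit_cost (fun _ => 0) i)^-1 <= rivals_load (fun _ => 0) i.
Proof.
rewrite is_NE_iff; last exact: feasible0.
have br_iff i := best_response_lbound_iff (unit_cost_gt0 _ i feasible0)
  (rivals_load_gt0 _ i feasible0) (dmax_gt0 i).
by split=> br i; apply/br_iff; apply: br.
Qed.

Lemma is_NE_max_iff : is_NE dmax eps xi ell theta dmax <->
  forall i, dmax i + rivals_load dmax i <= (unit_cost dmax i)^-1.
Proof.
rewrite is_NE_iff; last exact: feasible_max.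
have br_iff i := best_response_ubound_iff (unit_cost_gt0 _ i feasible_max)
  (rivals_load_gt0 _ i feasible_max) (dmax_gt0 i).
by split=> br i; apply/br_iff; apply: br.
Qed.

Lemma rivals_load0 i : rivals_load (fun _ => 0) i = eps i.
Proof. by rewrite /rivals_load big1 ?add0r. Qed.

Lemma unit_cost0 i :
  unit_cost (fun _ => 0) i = xi i * ell i + theta i * \sum_(j | j != i) ell j ^+ 2.
Proof. by rewrite /unit_cost; under eq_bigr do rewrite mul0r subr0 mul1r. Qed.

Lemma rivals_load_max i : dmax i + rivals_load dmax i = \sum_j dmax j + eps i.
Proof. by rewrite /rivals_load [\sum_j dmax j](bigD1 i) //= addrA. Qed.

Lemma unit_cost_max i : unit_cost dmax i = xi i * ell i.
Proof.
rewrite /unit_cost big1 ?mulr0 ?addr0 // => j _.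
by rewrite divff ?gt_eqF // subrr mul0r.
Qed.

End RevocationGame.

Theorem proposition2 (R : realType) (I : finType) (hI : (2 <= #|I|)%N)
  (dmax eps xi ell theta : I -> R)
  (hdmax : forall i, 0 < dmax i) (heps : forall i, 0 < eps i)
  (hxi : forall i, 0 < xi i) (hell : forall i, 0 < ell i)
  (htheta : forall i, 0 <= theta i) :
  (is_NE dmax eps xi ell theta (fun _ => 0) <->
     (forall i, eps i >= (xi i * ell i
                          + theta i * \sum_(j : I | j != i) ell j ^+ 2)^-1))
  /\
  (is_NE dmax eps xi ell theta dmax <->
     (forall i, eps i <= (xi i * ell i)^-1 - \sum_(j : I) dmax j)).
Proof.
split.
- rewrite is_NE0_iff //.
  by split=> ne i; have := ne i; rewrite unit_cost0 rivals_load0.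
- rewrite is_NE_max_iff //.
  by split=> ne i; have := ne i; rewrite unit_cost_max // rivals_load_max; lra.
Qed.
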